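(* Let $[x]t$ be a normal linear lambda term with exactly one free variable $x$. Then exactly one of the following holds: (1) $[x]t$ is the identity term, i.e. $t = x$; (2) $[x]t$ is function-open, i.e. $x(u)$ is a subterm of $t$ for some $u$; (3) $[x]t$ is value-open, i.e. $u(x)$ is a subterm of $t$ for some $u$.
   Context: Lambda skeletons: graded sets $\mathrm{SLam}(i)$, least such that $\_ \in \mathrm{SLam}(1)$; $p\in\mathrm{SLam}(j), q\in\mathrm{SLam}(k)\Rightarrow p(q)\in\mathrm{SLam}(j+k)$; $p\in\mathrm{SLam}(i+1)\Rightarrow \lambda\_.p\in\mathrm{SLam}(i)$. A linear lambda term with free variables $\Gamma$ decorating $p$, written $[\Gamma]t\in\Lambda_1(p)$, is defined by the rules: $[x]x\in\Lambda_1(\_)$; from $[\Gamma]t\in\Lambda_1(p)$, $[\Delta]u\in\Lambda_1(q)$ infer $[\Gamma,\Delta]t(u)\in\Lambda_1(p(q))$; from $[x,\Gamma]t\in\Lambda_1(p)$ infer $[\Gamma]\lambda x.t\in\Lambda_1(\lambda\_.p)$; from $[\Gamma,y,x,\Delta]t\in\Lambda_1(p)$ infer $[\Gamma,x,y,\Delta]t\in\Lambda_1(p)$ (so every variable is used exactly once). A linear term is normal if its skeleton $p$ of degree $i$ lies in $\mathrm{SNF}(i)$, where $\mathrm{SNeu}(i)$, $\mathrm{SNF}(i)$ are defined by the rules (v) $\_\in\mathrm{SNeu}(1)$; (a) $p\in\mathrm{SNeu}(j)$, $q\in\mathrm{SNF}(k)\Rightarrow p(q)\in\mathrm{SNeu}(j+k)$;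 (s) $p\in\mathrm{SNeu}(i)\Rightarrow p\in\mathrm{SNF}(i)$; ($\ell$) $p\in\mathrm{SNF}(i+1)\Rightarrow\lambda\_.p\in\mathrm{SNF}(i)$ (equivalently, the term contains no subterm $(\lambda y.v)(w)$). *)

From Stdlib Require Import List.
Import ListNotations.

Definition var := nat.

Inductive term : Type :=
| Var : var -> term
| App : term -> term -> term
| Lam : var -> term -> term.

Inductive skel : Type :=
| SHole : skel
| SApp : skel -> skel -> skel
| SLam : skel -> skel.

Inductive SLamDeg : nat -> skel -> Prop :=
| sl_hole : SLamDeg 1 SHole
| sl_app : forall j k p q, SLamDeg j p -> SLamDeg k q -> SLamDeg (j + k) (SApp p q)
| sl_lam : forall i p, SLamDeg (S i) p -> SLamDeg i (SLam p).

Inductive SNeu : nat -> skel -> Prop :=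
| sneu_v : SNeu 1 SHole
| sneu_a : forall j k p q, SNeu j p -> SNF k q -> SNeu (j + k) (SApp p q)
with SNF : nat -> skel -> Prop :=
| snf_s : forall i p, SNeu i p -> SNF i p
| snf_l : forall i p, SNF (S i) p -> SNF i (SLam p).

(* The application rule requires the contexts
   Gamma and Delta to be disjoint (contexts are lists of distinct
   variables), which is implicit in the paper's notation [Gamma,Delta]. *)
Inductive lin : list var -> term -> skel -> Prop :=
| lin_var : forall x, lin [x] (Var x) SHole
| lin_app : forall G D t u p q,
    lin G t p -> lin D u q -> NoDup (G ++ D) ->
    lin (G ++ D) (App t u) (SApp p q)
| lin_lam : forall x G t p,
    lin (x :: G) t p -> lin G (Lam x t) (SLam p)
| lin_exch : forall G D x y t p,
    lin (G ++ y :: x :: D) t p -> lin (G ++ x :: y :: D) t p.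

Definition normal_lin (G : list var) (t : term) : Prop :=
  exists p, lin G t p /\ SLamDeg (length G) p /\ SNF (length G) p.

(* subterm_at s bs t : s occurs as a subterm of t, and bs lists the
   variables bound by the lambdas on the path from the root of t to s. *)
Inductive subterm_at : term -> list var -> term -> Prop :=
| st_refl : forall t, subterm_at t [] t
| st_appl : forall s bs t u, subterm_at s bs t -> subterm_at s bs (App t u)
| st_appr : forall s bs t u, subterm_at s bs u -> subterm_at s bs (App t u)
| st_lam : forall s bs y t, subterm_at s bs t -> subterm_at s (y :: bs) (Lam y t).

(* x(u) is a subterm of t, with x referring to the free variable x *)
Definition function_open (x : var) (t : term) : Prop :=
  exists u bs, subterm_at (App (Var x) u) bs t /\ ~ In x bs.

(* u(x) is a subterm of t, with x referring to the free variable x *)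
Definition value_open (x : var) (t : term) : Prop :=
  exists u bs, subterm_at (App u (Var x)) bs t /\ ~ In x bs.

Definition is_identity (x : var) (t : term) : Prop := t = Var x.

Definition exactly_one (A B C : Prop) : Prop :=
  (A /\ ~ B /\ ~ C) \/ (~ A /\ B /\ ~ C) \/ (~ A /\ ~ B /\ C).

(* Linearity does all the work.  By induction on the
   linearity derivation, the unique occurrence of x either is the whole term or
   sits in an application, as its function (function-open) or as its argument
   (value-open).  The three cases exclude each other because function- and
   value-openness together need two free occurrences of x, while the linear
   term [x]t has exactly one. *)
From Stdlib Require Import List PeanoNat Lia Permutation.
Import ListNotations.

Fixpoint free_occ (x : var) (t : term) : nat :=
  match t with
  | Var y => if Nat.eqb y x then 1 else 0
  | App a b => free_occ x a + free_occ x b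
  | Lam y b => if Nat.eqb y x then 0 else free_occ x b
  end.

Lemma lin_NoDup G t p : lin G t p -> NoDup G.
Proof.
  induction 1 as [x | | x G t p _ IH | G D x y t p _ IH]; auto.
  - constructor; [intros [] | constructor].
  - now inversion IH.
  - eapply Permutation_NoDup; [| exact IH].
    apply Permutation_app_head, perm_swap.
Qed.

Lemma lin_free_occ G t p x :
  lin G t p -> free_occ x t = count_occ Nat.eq_dec G x.
Proof.
  induction 1 as [y | G D t u p q _ IHt _ IHu _ | y G t p Hlin IH
                 | G D y z t p _ IH]; simpl.
  - destruct (Nat.eqb_spec y x), (Nat.eq_dec y x); congruence.
  - now rewrite count_occ_app, IHt, IHu.
  - rewrite IH; simpl.
    destruct (Nat.eqb_spec y x), (Nat.eq_dec y x); try congruence.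
    subst; apply lin_NoDup, NoDup_cons_iff in Hlin as [Hx _].
    symmetry; now apply count_occ_not_In.
  - rewrite IH, !count_occ_app; simpl.
    destruct (Nat.eq_dec z x), (Nat.eq_dec y x); lia.
Qed.

Lemma subterm_free_occ_le s bs t x :
  subterm_at s bs t -> ~ In x bs -> free_occ x s <= free_occ x t.
Proof.
  induction 1 as [t | s bs t u _ IH | s bs t u _ IH | s bs y t _ IH];
    simpl; intro Hx; try lia.
  - specialize (IH Hx); lia.
  - specialize (IH Hx); lia.
  - destruct (Nat.eqb_spec y x) as [-> | _]; [now destruct Hx; left |].
    apply IH; intro; apply Hx; now right.
Qed.

(* [function_open x] and [value_open x] are convertible to
   [free_instance x (App (Var x))] and [free_instance x (fun u => App u (Var x))]. *)
Definition free_instance (x : var) (pat : term -> term) (t : term) : Prop :=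
  exists u bs, subterm_at (pat u) bs t /\ ~ In x bs.

Section FreeInstance.

Variables (x : var) (pat : term -> term).

Lemma free_instance_appl t u :
  free_instance x pat t -> free_instance x pat (App t u).
Proof. intros (w & bs & Hs & Hx); exists w, bs; split; [now constructor | easy]. Qed.

Lemma free_instance_appr t u :
  free_instance x pat u -> free_instance x pat (App t u).
Proof. intros (w & bs & Hs & Hx); exists w, bs; split; [now constructor | easy]. Qed.

Lemma free_instance_lam y t :
  y <> x -> free_instance x pat t -> free_instance x pat (Lam y t).
Proof.
  intros Hy (w & bs & Hs & Hx); exists w, (y :: bs).
  split; [now constructor | intros [-> | ?]; auto].
Qed.

Lemma free_instance_inv t :
  free_instance x pat t ->
  (exists u, pat u = t) \/
  match t with
  | Var _ => False
  | App a b => free_instance x pat a \/ free_instance x pat b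
  | Lam y b => y <> x /\ free_instance x pat b
  end.
Proof.
  intros (u & bs & Hs & Hx); remember (pat u) as s eqn:Es; revert Hx.
  destruct Hs as [t | s bs t v Hs | s bs t v Hs | s bs y t Hs]; intro Hx; subst.
  - left; now exists u.
  - right; left; now exists u, bs.
  - right; right; now exists u, bs.
  - right; split; [intros ->; apply Hx; now left |].
    exists u, bs; split; [easy | intro; apply Hx; now right].
Qed.

Lemma free_instance_free_occ_pos t :
  (forall u, 1 <= free_occ x (pat u)) -> free_instance x pat t -> 1 <= free_occ x t.
Proof.
  intros Hpat (u & bs & Hs & Hx).
  specialize (Hpat u); pose proof (subterm_free_occ_le _ _ _ x Hs Hx); lia.
Qed.

End FreeInstance.

Lemma lin_var_or_open G t p x :
  lin G t p -> In x G ->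
  t = Var x \/ function_open x t \/ value_open x t.
Proof.
  intros Hlin; revert x.
  induction Hlin as [y | G D t u p q _ IHt _ IHu _ | y G t p Hlin IH
                    | G D y z t p _ IH]; intros x Hx.
  - destruct Hx as [<- | []]; now left.
  - right; apply in_app_or in Hx as [Hx | Hx].
    + destruct (IHt x Hx) as [-> | [Hf | Hv]].
      * left; exists u, []; split; [constructor | intros []].
      * left; exact (free_instance_appl _ _ _ _ Hf).
      * right; exact (free_instance_appl _ _ _ _ Hv).
    + destruct (IHu x Hx) as [-> | [Hf | Hv]].
      * right; exists t, []; split; [constructor | intros []].
      * left; exact (free_instance_appr _ _ _ _ Hf).
      * right; exact (free_instance_appr _ _ _ _ Hv).
  - assert (Hyx : y <> x).
    { pose proof (lin_NoDup _ _ _ Hlin) as Hnd.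
      apply NoDup_cons_iff in Hnd as [Hy _]; now intros ->. }
    right; destruct (IH x (or_intror Hx)) as [-> | [Hf | Hv]].
    + (* y is bound in the body, so the body cannot be the other variable x *)
      pose proof (lin_free_occ _ _ _ y Hlin) as Hocc; simpl in Hocc.
      destruct (Nat.eqb_spec x y), (Nat.eq_dec y y); congruence.
    + left; exact (free_instance_lam _ _ _ _ Hyx Hf).
    + right; exact (free_instance_lam _ _ _ _ Hyx Hv).
  - apply IH; rewrite in_app_iff in *; simpl in *; tauto.
Qed.

Lemma function_open_free_occ_pos x t : function_open x t -> 1 <= free_occ x t.
Proof.
  apply free_instance_free_occ_pos; intro u; simpl; rewrite Nat.eqb_refl; lia.
Qed.

Lemma value_open_free_occ_pos x t : value_open x t -> 1 <= free_occ x t.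
Proof.
  apply free_instance_free_occ_pos; intro u; simpl; rewrite Nat.eqb_refl; lia.
Qed.

Lemma function_open_Var x y : ~ function_open x (Var y).
Proof. intros H; now destruct (free_instance_inv _ _ _ H) as [[u ?] | []]. Qed.

Lemma value_open_Var x y : ~ value_open x (Var y).
Proof. intros H; now destruct (free_instance_inv _ _ _ H) as [[u ?] | []]. Qed.

Lemma function_value_open_free_occ x t :
  function_open x t -> value_open x t -> 2 <= free_occ x t.
Proof.
  induction t as [y | t1 IH1 t2 IH2 | y t IH]; intros Hf Hv;
    destruct (free_instance_inv _ _ _ Hf) as [[u Hu] | Hf'];
    destruct (free_instance_inv _ _ _ Hv) as [[w Hw] | Hv']; try discriminate.
  - contradiction.
  - injection Hu as <- <-; injection Hw as _ <-.
    simpl; rewrite Nat.eqb_refl; lia.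
  - injection Hu as <- <-.
    destruct Hv' as [Hv' | Hv'].
    + now apply value_open_Var in Hv'.
    + pose proof (value_open_free_occ_pos _ _ Hv'); simpl; rewrite Nat.eqb_refl; lia.
  - injection Hw as <- <-.
    destruct Hf' as [Hf' | Hf'].
    + pose proof (function_open_free_occ_pos _ _ Hf'); simpl; rewrite Nat.eqb_refl; lia.
    + now apply function_open_Var in Hf'.
  - destruct Hf' as [Hf' | Hf'], Hv' as [Hv' | Hv'].
    + specialize (IH1 Hf' Hv'); simpl; lia.
    + pose proof (function_open_free_occ_pos _ _ Hf').
      pose proof (value_open_free_occ_pos _ _ Hv'); simpl; lia.
    + pose proof (function_open_free_occ_pos _ _ Hf').
      pose proof (value_open_free_occ_pos _ _ Hv'); simpl; lia.
    + specialize (IH2 Hf' Hv'); simpl; lia.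
  - destruct Hf' as [Hyx Hf'], Hv' as [_ Hv'].
    simpl; apply Nat.eqb_neq in Hyx as ->; auto.
Qed.

Theorem proposition4p5 (x : var) (t : term) :
  normal_lin [x] t ->
  exactly_one (is_identity x t) (function_open x t) (value_open x t).
Proof.
  intros (p & Hlin & _).
  assert (Hocc : free_occ x t = 1).
  { rewrite (lin_free_occ _ _ _ x Hlin); simpl.
    now destruct (Nat.eq_dec x x). }
  assert (Hexcl : ~ (function_open x t /\ value_open x t)).
  { intros [Hf Hv]; pose proof (function_value_open_free_occ _ _ Hf Hv); lia. }
  unfold exactly_one, is_identity.
  destruct (lin_var_or_open _ _ _ x Hlin (or_introl eq_refl)) as [-> | [Hf | Hv]].
  - left; repeat split; [apply function_open_Var | apply value_open_Var].
  - right; left; split; [| split; [easy |]].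
    + intros ->; now apply function_open_Var in Hf.
    + intros Hv; now apply Hexcl.
  - right; right; split; [| split; [| easy]].
    + intros ->; now apply value_open_Var in Hv.
    + intros Hf; now apply Hexcl.
Qed.
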